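(* In any $\{K_3,K_4\}$-decomposition of $K_{18}$ with $\alpha=13$, every vertex $x$ of $K_{18}$ satisfies $\alpha_x\in\{1,4\}$.
   Context: A $\{K_3,K_4\}$-decomposition of $K_v$ is a collection of subgraphs, each isomorphic to $K_3$ or $K_4$ (triples and quadruples), such that every edge of $K_v$ lies in exactly one of them. $\alpha$ is the number of copies of $K_3$ in the decomposition, and for a vertex $x$, $\alpha_x$ is the number of copies of $K_3$ in the decomposition containing $x$. *)

From mathcomp Require Import all_boot.
Set Implicit Arguments. Unset Strict Implicit. Unset Printing Implicit Defensive.

Definition K34_decomposition (n : nat) (D : {set {set 'I_n}}) : Prop :=
  (forall B, B \in D -> (#|B| == 3) || (#|B| == 4)) /\
  (forall u v : 'I_n, u != v -> #|[set B in D | (u \in B) && (v \in B)]| = 1).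

Definition alpha (n : nat) (D : {set {set 'I_n}}) : nat :=
  #|[set B in D | #|B| == 3]|.

Definition alpha_at (n : nat) (D : {set {set 'I_n}}) (x : 'I_n) : nat :=
  #|[set B in D | (#|B| == 3) && (x \in B)]|.

From mathcomp Require Import all_boot zify.
Set Implicit Arguments. Unset Strict Implicit. Unset Printing Implicit Defensive.

(* Counting the 17 edges at a vertex x gives 2 alpha_x + 3 q_x = 17, where q_x
   is the number of quadruples through x, so alpha_x is 1, 4 or 7.  Suppose
   alpha_x = 7 and let S be the set of the s vertices lying in at least four
   triples.  As sum_v alpha_v = 3 alpha = 39 and every vertex outside S lies in
   exactly one triple, sum_(v in S) alpha_v = 21 + s >= 4 s + 3, so s <= 6.
   For a triple B let k_B = |B /\ S| <= 3.  Then sum_B k_B = sum_(v in S) alpha_v,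
   and sum_B k_B^2 <= sum_(v in S) alpha_v + s (s - 1) because two vertices lie
   in at most one common triple.  The seven triples through x meet S in x and
   otherwise in disjoint sets, so at least 8 - s of them have k_B = 1.  Summing
   5 k + 2 [k <= 1] <= k^2 + 6 over all triples then yields
   4 (21 + s) + 2 (8 - s) <= s (s - 1) + 78, i.e. s^2 >= 3 s + 22, which is
   impossible for s <= 6. *)

Lemma sum_indicator_card (T : finType) (A : {set T}) (P : pred T) :
  \sum_(x in A) (P x : nat) = #|[set x in A | P x]|.
Proof. by rewrite -sum1dep_card big_mkcondr. Qed.

Lemma cardsIC1 (T : finType) (B : {set T}) x :
  x \in B -> #|B :&: [set~ x]| = #|B|.-1.
Proof. by move=> xB; rewrite -setDE (cardsD1 x B) xB. Qed.

Lemma sum_cardsI_mul (T : finType) (A : {set {set T}}) (S : {set T})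
    (g : {set T} -> nat) :
  \sum_(B in A) #|B :&: S| * g B = \sum_(u in S) \sum_(B in A | u \in B) g B.
Proof.
transitivity (\sum_(B in A) \sum_(u in S | u \in B) g B).
  apply: eq_bigr => B _; rewrite -sum_nat_const.
  by apply: eq_bigl => u; rewrite inE andbC.
rewrite (exchange_big_dep (fun u => u \in S)) => [|B u _ /andP[] //].
by apply: eq_bigr => u uS; apply: eq_bigl => B; rewrite uS.
Qed.

Lemma sum_cardsI (T : finType) (A : {set {set T}}) (S : {set T}) :
  \sum_(B in A) #|B :&: S| = \sum_(u in S) #|[set B in A | u \in B]|.
Proof.
under eq_bigr do rewrite -[#|_|]muln1.
by rewrite sum_cardsI_mul; under eq_bigr do rewrite sum1dep_card.
Qed.

Definition triples n (D : {set {set 'I_n}}) : {set {set 'I_n}} :=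
  [set B in D | #|B| == 3].

Definition triples_at n (D : {set {set 'I_n}}) (x : 'I_n) : {set {set 'I_n}} :=
  [set B in triples D | x \in B].

Lemma alpha_atE n (D : {set {set 'I_n}}) x : alpha_at D x = #|triples_at D x|.
Proof. by apply: eq_card => B; rewrite !inE andbA. Qed.

Lemma sum_alpha_at n (D : {set {set 'I_n}}) : \sum_x alpha_at D x = 3 * alpha D.
Proof.
transitivity (\sum_(B in triples D) #|B :&: setT|).
  rewrite sum_cardsI; apply: eq_big => [x|x _]; first by rewrite !inE.
  by rewrite alpha_atE.
rewrite mulnC -sum_nat_const; apply: eq_bigr => B.
by rewrite setIT inE => /andP[_ /eqP].
Qed.

Section Decomposition.

Variables (n : nat) (D : {set {set 'I_n}}).
Hypothesis decD : K34_decomposition D.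
Implicit Types (S : {set 'I_n}) (x u : 'I_n).

Lemma degree_equation x : n.-1 + alpha_at D x = 3 * #|[set B in D | x \in B]|.
Proof.
have deg_x : \sum_(B in [set B in D | x \in B]) #|B :&: [set~ x]| = n.-1.
  rewrite sum_cardsI -[in RHS](card_ord n) -(cardsC1 x) -sum1_card.
  apply: eq_bigr => u /[1!in_setC1] ux; rewrite -(decD.2 u x ux).
  by apply: eq_card => B; rewrite !inE -andbA [(x \in B) && _]andbC.
have alpha_x : alpha_at D x = \sum_(B in [set B in D | x \in B]) (#|B| == 3).
  by rewrite sum_indicator_card; apply: eq_card => B; rewrite !inE [RHS]andbAC andbA.
rewrite -deg_x alpha_x mulnC -sum_nat_const -big_split.
apply: eq_bigr => B /[!inE] /andP[/(decD.1 B) sizeB xB].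
by rewrite cardsIC1 //; case/orP: sizeB => /eqP ->.
Qed.

Lemma alpha_at_le_blocks x : alpha_at D x <= #|[set B in D | x \in B]|.
Proof.
by apply: subset_leq_card; apply/subsetP => B /[!inE] /and3P[-> _ ->].
Qed.

Lemma card_triples_at_pair_le1 x u :
  u != x -> #|[set B in triples_at D x | u \in B]| <= 1.
Proof.
move=> ux; rewrite -(decD.2 u x ux); apply: subset_leq_card.
by apply/subsetP => B /[!inE] /andP[/andP[/andP[-> _] ->] ->].
Qed.

Lemma sum_cardsI_triples_at x S :
  \sum_(B in triples_at D x) #|B :&: S| <= alpha_at D x + #|S :\ x|.
Proof.
rewrite sum_cardsI.
have others (A : {set 'I_n}) : x \notin A ->
    \sum_(u in A) #|[set B in triples_at D x | u \in B]| <= #|A|.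
  move=> xNA; rewrite -sum1_card; apply: leq_sum => u uA.
  by apply: card_triples_at_pair_le1; apply: contraNneq xNA => <-.
have [xS | xNS] := boolP (x \in S).
  rewrite (big_setD1 x xS) leq_add ?others ?setD11 // alpha_atE.
  by apply: subset_leq_card; apply/subsetP => B /[!inE] /andP[].
by rewrite (leq_trans (others S xNS)) // (cardsD1 x S) (negPf xNS) leq_addl.
Qed.

Lemma sum_cardsI_triples S :
  \sum_(B in triples D) #|B :&: S| = \sum_(u in S) alpha_at D u.
Proof. by rewrite sum_cardsI; apply: eq_bigr => u _; rewrite alpha_atE. Qed.

Lemma sum_sqr_cardsI_triples S :
  \sum_(B in triples D) #|B :&: S| ^ 2
  <= \sum_(u in S) alpha_at D u + #|S| * #|S|.-1.
Proof.
under eq_bigr do rewrite -mulnn.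
rewrite sum_cardsI_mul.
apply: (@leq_trans (\sum_(u in S) (alpha_at D u + #|S|.-1))).
  apply: leq_sum => u uS.
  have -> : \sum_(B in triples D | u \in B) #|B :&: S|
            = \sum_(B in triples_at D u) #|B :&: S|.
    by apply: eq_bigl => B; rewrite [in RHS]inE.
  by rewrite (cardsD1 u S) uS sum_cardsI_triples_at.
by rewrite big_split sum_nat_const.
Qed.

Lemma cardsI_triple_le3 S B : B \in triples D -> #|B :&: S| <= 3.
Proof. by rewrite inE => /andP[_ /eqP <-]; rewrite subset_leq_card ?subsetIl. Qed.

Lemma cardsI_triples_quadratic_bound S :
  5 * \sum_(B in triples D) #|B :&: S|
    + 2 * #|[set B in triples D | #|B :&: S| <= 1]|
  <= \sum_(B in triples D) #|B :&: S| ^ 2 + 6 * alpha D.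
Proof.
rewrite -sum_indicator_card /alpha -/(triples D) [6 * _]mulnC -sum_nat_const.
rewrite !big_distrr -!big_split leq_sum // => B /(cardsI_triple_le3 S).
by case: #|_| => [|[|[|[|]]]].
Qed.

Lemma two_alpha_at_le x S : x \in S ->
  2 * alpha_at D x
  <= #|[set B in triples_at D x | #|B :&: S| <= 1]|
     + \sum_(B in triples_at D x) #|B :&: S|.
Proof.
move=> xS; rewrite alpha_atE -sum_indicator_card mulnC -sum_nat_const -big_split.
apply: leq_sum => B /[!inE] /andP[_ xB].
have : 0 < #|B :&: S| by apply/card_gt0P; exists x; rewrite inE xB xS.
by case: #|_| => [|[|]].
Qed.

Lemma sum_alpha_at_set_bound x S : x \in S ->
  4 * \sum_(u in S) alpha_at D u + 2 * (alpha_at D x - #|S :\ x|)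
  <= #|S| * #|S|.-1 + 6 * alpha D.
Proof.
move=> xS.
have sum_k := sum_cardsI_triples S.
have sum_k2 := sum_sqr_cardsI_triples S.
have quadratic := cardsI_triples_quadratic_bound S.
have sum_kx := sum_cardsI_triples_at x S.
have two_ax := two_alpha_at_le xS.
have light_x : #|[set B in triples_at D x | #|B :&: S| <= 1]|
             <= #|[set B in triples D | #|B :&: S| <= 1]|.
  by apply: subset_leq_card; apply/subsetP => B /[!inE] /andP[/andP[-> _] ->].
(* [set] merges convertible but syntactically distinct copies of [#|S|],
   which [lia] would otherwise take for different atoms. *)
set s := #|S| in sum_k2 *.
lia.
Qed.

End Decomposition.

Lemma alpha_at_cases (D : {set {set 'I_18}}) x : K34_decomposition D ->
  [\/ alpha_at D x = 1, alpha_at D x = 4 | alpha_at D x = 7].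
Proof.
move=> decD; have deg := degree_equation decD x; have le := alpha_at_le_blocks D x.
have : alpha_at D x = 1 \/ alpha_at D x = 4 \/ alpha_at D x = 7 by lia.
by case=> [|[|]]; [constructor 1 | constructor 2 | constructor 3].
Qed.

Lemma alpha_at_neq7 (D : {set {set 'I_18}}) x :
  K34_decomposition D -> alpha D = 13 -> alpha_at D x != 7.
Proof.
move=> decD alpha13; apply/eqP => ax7.
pose S : {set 'I_18} := [set v | 4 <= alpha_at D v].
have xS : x \in S by rewrite inE ax7.
have sum39 : \sum_(v in S) alpha_at D v + \sum_(v in ~: S) alpha_at D v = 39.
  transitivity (3 * alpha D); last by rewrite alpha13.
  rewrite -sum_alpha_at [RHS](bigID (mem S)) /=; congr (_ + _).
  by apply: eq_bigl => v; rewrite inE.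
have light : \sum_(v in ~: S) alpha_at D v = #|~: S|.
  rewrite -sum1_card; apply: eq_bigr => v /[!inE].
  by case: (alpha_at_cases v decD) => ->.
have heavy : 4 * #|S| + 3 <= \sum_(v in S) alpha_at D v.
  rewrite (big_setD1 x xS) ax7 (cardsD1 x S) xS add1n mulnS addnAC leq_add2l.
  rewrite mulnC -sum_nat_const; apply: leq_sum => v /setD1P[_].
  by rewrite inE.
have cardS := cardsC S; rewrite card_ord in cardS.
have sizeS := cardsD1 x S; rewrite xS add1n in sizeS.
have bound := sum_alpha_at_set_bound decD xS.
rewrite ax7 alpha13 in bound; rewrite light in sum39.
(* As in [sum_alpha_at_set_bound], [set] unifies the atoms for [nia]. *)
set SA := \sum_(v in S) alpha_at D v in sum39 heavy bound.
rewrite sizeS /= in bound heavy cardS.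
set c := #|~: S| in sum39 cardS.
set s' := #|S :\ x| in bound heavy cardS.
nia.
Qed.

Theorem mainTheorem9 (D : {set {set 'I_18}}) :
  K34_decomposition D -> alpha D = 13 ->
  forall x : 'I_18, alpha_at D x = 1 \/ alpha_at D x = 4.
Proof.
move=> decD alpha13 x.
case: (alpha_at_cases x decD) => [-> | -> | ax7]; [by left | by right |].
by have := alpha_at_neq7 x decD alpha13; rewrite ax7.
Qed.
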